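(* Let $F$ be the elementary cellular automaton with rule number 32. For every nonempty finite word $u\in\{0,1\}^*$, the deterministic communication complexity of $\textsc{SInv}_{F,u}$ restricted to inputs of length $n$ is bounded by a constant independent of $n$.
   Context: An elementary cellular automaton (ECA) with rule number $N\in\{0,\dots,255\}$ is the map $F:\{0,1\}^{\mathbb Z}\to\{0,1\}^{\mathbb Z}$ given by $F(x)_i=f(x_{i-1},x_i,x_{i+1})$. Here the local rule $f:\{0,1\}^3\to\{0,1\}$ is determined by $N=\sum_{a,b,c\in\{0,1\}}2^{4a+2b+c}f(a,b,c)$. For a nonempty finite word $u$, $p_u\in\{0,1\}^{\mathbb Z}$ is defined by $(p_u)_i=u_{i\bmod |u|}$. For a finite word $x$, $p_u[x]$ is the configuration equal to $x$ on positions $0,\dots,|x|-1$ and to $p_u$ elsewhere. $\textsc{SInv}_{F,u}$ is the decision problem: on input a finite word $x$, decide whether there is an integer $w$ such that for all $t\ge0$ the set of positions where $F^t(p_u)$ and $F^t(p_u[x])$ differ is contained in an interval of length $w$. For each $n$, it is regarded as a function $\{0,1\}^n\to\{0,1\}$. For a function $g:X\times Y\to Z$, $D(g)$ is the minimal depth of a deterministic two-party protocol computing $g$. In such a protocol, Alice knows $x$ and Bob knows $y$. The protocol is a binary tree: each internal node is labelled by a function of Alice's input only or of Bob's input only, with values in $\{\text{left},\text{right}\}$, and each leaf is labelled by an output value. For $g:\{0,1\}^m\to Z$, set $D(g)=\max_{0\le i<m}D(g_i)$, where $g_i:\{0,1\}^i\times\{0,1\}^{m-i}\to Z$ is $g_i(x,y)=g(xy)$.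 *)

From Stdlib Require Import ZArith List Arith Bool.
Import ListNotations.
Open Scope Z_scope.

(* Configurations in {0,1}^Z, with 0/1 encoded as false/true. *)
Definition config := Z -> bool.

Definition b2n (b : bool) : nat := if b then 1%nat else 0%nat.

Definition local_rule (N : nat) (a b c : bool) : bool :=
  Nat.testbit N (4 * b2n a + 2 * b2n b + b2n c)%nat.

Definition eca (N : nat) (x : config) : config :=
  fun i => local_rule N (x (i - 1)) (x i) (x (i + 1)).

Fixpoint iterF (N : nat) (t : nat) (x : config) : config :=
  match t with
  | O => x
  | S t' => eca N (iterF N t' x)
  end.

Definition periodic (u : list bool) : config :=
  fun i => nth (Z.to_nat (i mod Z.of_nat (length u))) u false.

Definition patch (u x : list bool) : config :=
  fun i => if andb (0 <=? i) (i <? Z.of_nat (length x))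
           then nth (Z.to_nat i) x false
           else periodic u i.

Definition SInv (N : nat) (u x : list bool) : Prop :=
  exists w : Z, forall t : nat, exists a : Z, forall i : Z,
    iterF N t (periodic u) i <> iterF N t (patch u x) i -> a <= i < a + w.

(* Deterministic two-party protocols: binary trees whose internal nodes are
   labelled by a function of Alice's input only or of Bob's input only,
   with values in {left,right} (false = left, true = right), and leaves
   labelled by an output value. *)
Inductive protocol (X Y Z : Type) : Type :=
| Leaf : Z -> protocol X Y Z
| NodeA : (X -> bool) -> protocol X Y Z -> protocol X Y Z -> protocol X Y Z
| NodeB : (Y -> bool) -> protocol X Y Z -> protocol X Y Z -> protocol X Y Z.

Arguments Leaf {X Y Z} _.
Arguments NodeA {X Y Z} _ _ _.
Arguments NodeB {X Y Z} _ _ _.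

Fixpoint run {X Y Z : Type} (p : protocol X Y Z) (x : X) (y : Y) : Z :=
  match p with
  | Leaf z => z
  | NodeA f l r => if f x then run r x y else run l x y
  | NodeB g l r => if g y then run r x y else run l x y
  end.

Fixpoint depth {X Y Z : Type} (p : protocol X Y Z) : nat :=
  match p with
  | Leaf _ => 0
  | NodeA _ l r => S (Nat.max (depth l) (depth r))
  | NodeB _ l r => S (Nat.max (depth l) (depth r))
  end.

(* D(SInv_{F,u} on {0,1}^n) <= C, i.e. for every split point 0 <= i < n,
   the function g_i(x,y) = SInv(xy) on {0,1}^i x {0,1}^(n-i) is computed by
   a protocol of depth <= C. *)
Definition SInv_CC_le (N : nat) (u : list bool) (n C : nat) : Prop :=
  forall i : nat, (i < n)%nat ->
    exists p : protocol (list bool) (list bool) bool,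
      (depth p <= C)%nat /\
      forall x y : list bool, length x = i -> length y = (n - i)%nat ->
        (run p x y = true <-> SInv N u (x ++ y)).

(* Rule 32 is f(a,b,c) = a && ~b && c, so a cell is 1 at time t only if the
   initial configuration reads 1010...101 on the 2t+1 cells below it.  If p_u
   contains two equal neighbours, such windows eventually meet a pair of equal
   neighbours of p_u outside the patch, so both orbits die out and every input
   is in SInv.  Otherwise p_u = (01)^oo and F shifts it; a defect of the patch
   kills a light cone growing in both directions while the 1s of the shifted
   p_u persist, so the differences spread without bound.  Hence SInv holds
   exactly when the input agrees with p_u, which Alice and Bob test on their
   own halves with one bit each. *)
From Stdlib Require Import ZArith List Arith Lia Bool Classical.
Import ListNotations.
Open Scope Z_scope.

Lemma local_rule32 a b c : local_rule 32 a b c = a && negb b && c.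
Proof. destruct a, b, c; reflexivity. Qed.

Lemma eca32 x i : eca 32 x i = x (i - 1) && negb (x i) && x (i + 1).
Proof. apply local_rule32. Qed.

Lemma iterF_cone_ext N t x y i :
  (forall j, i - Z.of_nat t <= j <= i + Z.of_nat t -> x j = y j) ->
  iterF N t x i = iterF N t y i.
Proof.
  revert i; induction t as [|t IH]; intros i Hxy; cbn [iterF].
  - apply Hxy; lia.
  - unfold eca.
    rewrite (IH (i - 1)), (IH i), (IH (i + 1)); auto; intros j Hj; apply Hxy; lia.
Qed.

Lemma iterF32_true_pattern t x i : iterF 32 t x i = true ->
  forall j, i - Z.of_nat t <= j <= i + Z.of_nat t ->
  x j = Z.even (j - i + Z.of_nat t).
Proof.
  revert i; induction t as [|t IH]; intros i Hi j Hj; cbn [iterF] in Hi.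
  - replace (j - i + Z.of_nat 0) with 0 by lia.
    replace j with i by lia; exact Hi.
  - rewrite eca32 in Hi.
    apply andb_prop in Hi as [Hi Hr]; apply andb_prop in Hi as [Hl Hc].
    destruct (Z_le_gt_dec j (i - 1 + Z.of_nat t)).
    { rewrite (IH _ Hl j) by lia; f_equal; lia. }
    destruct (Z_le_gt_dec (i + 1 - Z.of_nat t) j).
    { rewrite (IH _ Hr j) by lia.
      replace (j - i + Z.of_nat (S t)) with (j - (i + 1) + Z.of_nat t + 2 * 1) by lia.
      now rewrite Z.even_add_mul_2. }
    assert (t = 0%nat) by lia; subst t.
    replace j with i by lia; replace (i - i + Z.of_nat 1) with 1 by lia.
    now apply negb_true_iff in Hc.
Qed.

Lemma iterF32_true_alternates t x i : iterF 32 t x i = true ->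
  forall j, i - Z.of_nat t <= j < i + Z.of_nat t -> x j <> x (j + 1).
Proof.
  intros Hi j Hj.
  rewrite !(iterF32_true_pattern t x i Hi) by lia.
  replace (j + 1 - i + Z.of_nat t) with (Z.succ (j - i + Z.of_nat t)) by lia.
  rewrite Z.even_succ, <- Z.negb_even.
  destruct (Z.even _); discriminate.
Qed.

Lemma iterF32_false_of_equal_pair t x i j :
  i - Z.of_nat t <= j < i + Z.of_nat t -> x j = x (j + 1) ->
  iterF 32 t x i = false.
Proof.
  intros Hj Hx.
  destruct (iterF 32 t x i) eqn:E; [|reflexivity].
  exfalso; exact (iterF32_true_alternates t x i E j Hj Hx).
Qed.

Lemma iterF32_alternating t x i : (forall j, x j <> x (j + 1)) ->
  iterF 32 t x i = x (i + Z.of_nat t).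
Proof.
  intros Halt; revert i; induction t as [|t IH]; intros i; cbn [iterF].
  - f_equal; lia.
  - rewrite eca32, !IH.
    set (k := i + Z.of_nat t).
    replace (i - 1 + Z.of_nat t) with (k - 1) by lia.
    replace (i + 1 + Z.of_nat t) with (k + 1) by lia.
    replace (i + Z.of_nat (S t)) with (k + 1) by lia.
    pose proof (Halt (k - 1)) as H1; replace (k - 1 + 1) with k in H1 by lia.
    pose proof (Halt k) as H2.
    destruct (x (k - 1)), (x k), (x (k + 1)); simpl; congruence.
Qed.

Lemma alternating_agree_on_window (x y : config) a b e d :
  (forall j, a <= j < b -> x j <> x (j + 1)) ->
  (forall j, a <= j < b -> y j <> y (j + 1)) ->
  a <= e <= b -> a <= d <= b -> x e = y e -> x d = y d.
Proof.
  intros Hx Hy He Hd Hxye.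
  assert (Hstep : forall n : nat, a + Z.of_nat n <= b ->
            (x (a + Z.of_nat n) = y (a + Z.of_nat n) <-> x a = y a)).
  { induction n as [|n IH]; intros Hn.
    - rewrite Z.add_0_r; tauto.
    - set (j := a + Z.of_nat n) in IH.
      replace (a + Z.of_nat (S n)) with (j + 1) by lia.
      rewrite <- (IH ltac:(lia)).
      pose proof (Hx j ltac:(lia)); pose proof (Hy j ltac:(lia)).
      destruct (x j), (x (j + 1)), (y j), (y (j + 1)); intuition congruence. }
  pose proof (Hstep (Z.to_nat (e - a)) ltac:(lia)) as Ee.
  pose proof (Hstep (Z.to_nat (d - a)) ltac:(lia)) as Ed.
  replace (a + Z.of_nat (Z.to_nat (e - a))) with e in Ee by lia.
  replace (a + Z.of_nat (Z.to_nat (d - a))) with d in Ed by lia.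
  tauto.
Qed.

Lemma periodic_add_period u j q :
  periodic u (j + q * Z.of_nat (length u)) = periodic u j.
Proof. unfold periodic; now rewrite Z_mod_plus_full. Qed.

Lemma periodic_equal_pair_in_window u k lo : u <> [] ->
  periodic u k = periodic u (k + 1) ->
  exists j, lo <= j < lo + Z.of_nat (length u) /\ periodic u j = periodic u (j + 1).
Proof.
  intros Hu Hk.
  set (m := Z.of_nat (length u)).
  assert (Hm : 0 < m) by (destruct u; [congruence | unfold m; simpl; lia]).
  pose proof (Z.div_mod (k - lo) m ltac:(lia)) as Hdiv.
  pose proof (Z.mod_pos_bound (k - lo) m Hm).
  set (q := (k - lo) / m) in Hdiv.
  exists (lo + (k - lo) mod m); split; [lia|].
  rewrite <- (periodic_add_period u _ q), <- (periodic_add_period u (_ + 1) q).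
  fold m; replace (lo + (k - lo) mod m + q * m) with k by lia.
  replace (lo + (k - lo) mod m + 1 + q * m) with (k + 1) by lia.
  exact Hk.
Qed.

Lemma patch_out u z j : j < 0 \/ Z.of_nat (length z) <= j ->
  patch u z j = periodic u j.
Proof.
  intros Hj; unfold patch.
  destruct (0 <=? j) eqn:E1, (j <? Z.of_nat (length z)) eqn:E2; auto.
  apply Z.leb_le in E1; apply Z.ltb_lt in E2; lia.
Qed.

Lemma patch_in u z (j : nat) : (j < length z)%nat ->
  patch u z (Z.of_nat j) = nth j z false.
Proof.
  intros Hj; unfold patch.
  replace (0 <=? Z.of_nat j) with true by (symmetry; apply Z.leb_le; lia).
  replace (Z.of_nat j <? Z.of_nat (length z)) with true by (symmetry; apply Z.ltb_lt; lia).
  now rewrite Nat2Z.id.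
Qed.

Lemma iterF_patch_diff_in_cone N u z t i :
  iterF N t (periodic u) i <> iterF N t (patch u z) i ->
  - Z.of_nat t <= i < Z.of_nat (length z) + Z.of_nat t.
Proof.
  intros Hd.
  destruct (Z.le_gt_cases (- Z.of_nat t) i), (Z.lt_ge_cases i (Z.of_nat (length z) + Z.of_nat t));
    try lia; exfalso; apply Hd, iterF_cone_ext; intros j Hj; symmetry; apply patch_out; lia.
Qed.

Lemma SInv_of_eventually_equal N u z (T : nat) :
  (forall t i, (T <= t)%nat -> iterF N t (periodic u) i = iterF N t (patch u z) i) ->
  SInv N u z.
Proof.
  intros Heq; exists (Z.of_nat (length z) + 2 * Z.of_nat T); intros t.
  exists (- Z.of_nat T); intros i Hd.
  destruct (Nat.lt_ge_cases t T) as [Hlt|Hge].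
  - apply iterF_patch_diff_in_cone in Hd; lia.
  - exfalso; exact (Hd (Heq t i Hge)).
Qed.

Lemma iterF32_vanishes u y L k t i : u <> [] ->
  periodic u k = periodic u (k + 1) ->
  (forall j, j < 0 \/ L <= j -> y j = periodic u j) -> 0 <= L ->
  L + 2 * Z.of_nat (length u) <= Z.of_nat t ->
  iterF 32 t y i = false.
Proof.
  intros Hu Hk Hy HL Ht.
  set (m := Z.of_nat (length u)) in Ht.
  assert (0 <= m) by (unfold m; lia).
  assert (exists lo, i - Z.of_nat t <= lo /\ lo + m <= i + Z.of_nat t /\
                  (lo + m < 0 \/ L <= lo)) as [lo Hlo].
  { destruct (Z_lt_le_dec (i - Z.of_nat t + m) 0);
      [exists (i - Z.of_nat t) | exists (i + Z.of_nat t - m)]; lia. }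
  destruct (periodic_equal_pair_in_window u k lo Hu Hk) as [j [Hj Hpj]]; fold m in Hj.
  apply (iterF32_false_of_equal_pair t y i j); [lia|].
  rewrite !Hy by lia; exact Hpj.
Qed.

Lemma SInv32_of_equal_pair u z k : u <> [] ->
  periodic u k = periodic u (k + 1) -> SInv 32 u z.
Proof.
  intros Hu Hk.
  set (L := Z.of_nat (length z)).
  apply (SInv_of_eventually_equal _ _ _ (Z.to_nat (L + 2 * Z.of_nat (length u)))).
  intros t i Ht.
  rewrite (iterF32_vanishes u (periodic u) L k t i), (iterF32_vanishes u (patch u z) L k t i);
    auto; try lia.
  intros j Hj; apply patch_out; unfold L in Hj; lia.
Qed.

Lemma iterF32_vanishes_near_defect (x y : config) L d t i :
  (forall j, x j <> x (j + 1)) ->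
  (forall j, j < 0 \/ L <= j -> y j = x j) ->
  0 <= d < L -> y d <> x d -> L <= Z.of_nat t ->
  d - Z.of_nat t <= i <= d + Z.of_nat t ->
  iterF 32 t y i = false.
Proof.
  intros Hx Hyx Hd Hyd Ht Hi.
  destruct (iterF 32 t y i) eqn:E; [exfalso | reflexivity].
  assert (exists e, i - Z.of_nat t <= e <= i + Z.of_nat t /\ (e < 0 \/ L <= e))
    as [e [He1 He2]].
  { destruct (Z_lt_le_dec (i - Z.of_nat t) 0);
      [exists (i - Z.of_nat t) | exists (i + Z.of_nat t)]; lia. }
  apply Hyd, (alternating_agree_on_window y x (i - Z.of_nat t) (i + Z.of_nat t) e d).
  - exact (iterF32_true_alternates t y i E).
  - intros j _; apply Hx.
  - exact He1.
  - lia.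
  - now apply Hyx.
Qed.

Lemma not_SInv32_of_defect u z d : (forall j, periodic u j <> periodic u (j + 1)) ->
  0 <= d < Z.of_nat (length z) -> patch u z d <> periodic u d -> ~ SInv 32 u z.
Proof.
  intros Halt Hd Hdef [w Hw].
  set (L := Z.of_nat (length z)) in Hd.
  set (t := (Z.to_nat (Z.abs w) + Z.to_nat L + 2)%nat).
  set (T := Z.of_nat t).
  destruct (Hw t) as [a Ha].
  assert (Hdiff : forall i, d - T <= i <= d + T -> periodic u (i + T) = true ->
                    a <= i < a + w).
  { intros i Hi Hp; apply Ha.
    rewrite iterF32_alternating by exact Halt; fold T; rewrite Hp.
    rewrite (iterF32_vanishes_near_defect (periodic u) (patch u z) L d t i).
    - discriminate.
    - exact Halt.
    - intros j Hj; apply patch_out; exact Hj.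
    - exact Hd.
    - exact Hdef.
    - unfold T, t, L; lia.
    - exact Hi. }
  assert (Hone : forall j, exists k, j <= k <= j + 1 /\ periodic u (k + T) = true).
  { intros j; pose proof (Halt (j + T)) as Hj.
    destruct (periodic u (j + T)) eqn:E.
    - exists j; split; [lia | exact E].
    - exists (j + 1); split; [lia|].
      replace (j + 1 + T) with (j + T + 1) by lia.
      destruct (periodic u (j + T + 1)); congruence. }
  destruct (Hone (d - T)) as [i1 [H1 P1]], (Hone (d + T - 1)) as [i2 [H2 P2]].
  pose proof (Hdiff i1 ltac:(lia) P1); pose proof (Hdiff i2 ltac:(lia) P2).
  unfold T, t in *; lia.
Qed.

Fixpoint matches_periodic (u s : list bool) (off : nat) : bool :=
  match s with
  | [] => true
  | b :: s' => Bool.eqb b (periodic u (Z.of_nat off)) && matches_periodic u s' (S off)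
  end.

Lemma matches_periodic_app u x y off :
  matches_periodic u (x ++ y) off =
  matches_periodic u x off && matches_periodic u y (off + length x).
Proof.
  revert off; induction x as [|b x IH]; intros off; simpl.
  - now rewrite Nat.add_0_r.
  - now rewrite IH, andb_assoc, Nat.add_succ_r.
Qed.

Lemma matches_periodic_spec u s off : matches_periodic u s off = true <->
  forall j, (j < length s)%nat -> nth j s false = periodic u (Z.of_nat (off + j)).
Proof.
  revert off; induction s as [|b s IH]; intros off; simpl.
  - split; [intros _ j Hj; lia | reflexivity].
  - rewrite andb_true_iff, eqb_true_iff, IH; split.
    + intros [Hb Hs] [|j] Hj.
      * now rewrite Nat.add_0_r.
      * rewrite Hs by lia; do 2 f_equal; lia.
    + intros H; split.
      * rewrite (H 0%nat) by lia; now rewrite Nat.add_0_r.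
      * intros j Hj; rewrite (H (S j)) by lia; do 2 f_equal; lia.
Qed.

Lemma SInv32_alternating_iff u z : (forall j, periodic u j <> periodic u (j + 1)) ->
  SInv 32 u z <-> matches_periodic u z 0 = true.
Proof.
  intros Halt; rewrite matches_periodic_spec; simpl; split.
  - intros HS j Hj.
    destruct (bool_dec (nth j z false) (periodic u (Z.of_nat j))) as [E|E]; [exact E|].
    exfalso; apply (not_SInv32_of_defect u z (Z.of_nat j) Halt); [lia | | exact HS].
    now rewrite patch_in.
  - intros Hz; apply (SInv_of_eventually_equal _ _ _ 0); intros t i _.
    apply iterF_cone_ext; intros j _.
    destruct (Z_lt_le_dec j 0), (Z_lt_le_dec j (Z.of_nat (length z)));
      try (symmetry; apply patch_out; lia).
    replace j with (Z.of_nat (Z.to_nat j)) by lia.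
    rewrite patch_in, Hz by lia; reflexivity.
Qed.

Theorem mainTheorem10 :
  forall u : list bool, u <> nil ->
    exists C : nat, forall n : nat, SInv_CC_le 32 u n C.
Proof.
  intros u Hu; exists 2%nat; intros n i _.
  destruct (classic (exists k, periodic u k = periodic u (k + 1))) as [[k Hk]|Hno].
  - exists (Leaf true); split; [simpl; lia|].
    intros x y _ _; split; [intros _; exact (SInv32_of_equal_pair u _ k Hu Hk) | reflexivity].
  - assert (Halt : forall j, periodic u j <> periodic u (j + 1))
      by (intros j E; apply Hno; eauto).
    exists (NodeA (fun x => matches_periodic u x 0) (Leaf false)
              (NodeB (fun y => matches_periodic u y i) (Leaf false) (Leaf true))).
    split; [simpl; lia|].
    intros x y Hx _.
    rewrite SInv32_alternating_iff, matches_periodic_app, Hx by exact Halt; simpl.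
    destruct (matches_periodic u x 0), (matches_periodic u y i); simpl; split; congruence.
Qed.
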